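(* Let $X_1,\dots,X_n$ be i.i.d. real random variables whose common distribution is symmetric about an unknown $\mu\in\mathbb{R}$ (i.e. $X_1-\mu$ and $\mu-X_1$ have the same distribution). Fix integers $k\le n$ and $1\le r\le m$, and let $R(\theta)$ be the one-sided resampled median-of-means rank defined in the context. Then $$\mathbb{P}\big(R(\mu)>m-r\big)=\frac{r}{m}.$$
   Context: Blocks: for $\ell=1,\dots,k$ let $B_\ell=\{i\in[n]: i\equiv \ell \pmod k\}$, so each $|B_\ell|\ge \lfloor n/k\rfloor$. Median: for reals $y_1,\dots,y_k$ with order statistics $y_{(1)}\le\dots\le y_{(k)}$, $\mathrm{med}(y_1,\dots,y_k)=y_{(k/2)}$ if $k$ is even and $y_{(\lfloor k/2\rfloor+1)}$ if $k$ is odd. Median-of-means: for $x=(x_1,\dots,x_n)$, $\widehat\mu(x)=\mathrm{med}\big(\frac{1}{|B_1|}\sum_{i\in B_1}x_i,\dots,\frac{1}{|B_k|}\sum_{i\in B_k}x_i\big)$. Randomization: $\{\alpha_{i,j}\}_{i\in[n],j\in[m-1]}$ are i.i.d. Rademacher signs ($\pm1$ with probability $1/2$) independent of the data, and $\pi$ is a uniformly random permutation of $\{0,1,\dots,m-1\}$ independent of the data and of the signs. For $\theta\in\mathbb{R}$: $\mathcal{D}_0(\theta)=(X_1,\dots,X_n)$ and $\mathcal{D}_j(\theta)=(\alpha_{1,j}(X_1-\theta)+\theta,\dots,\alpha_{n,j}(X_n-\theta)+\theta)$ for $j\in[m-1]$ (the same signs are used for every $\theta$). Reference variables: $S_j(\theta)=\widehat\mu(\mathcal{D}_j(\theta))-\theta$,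 $j=0,\dots,m-1$. Tie-broken order: $S_j(\theta)\prec_\pi S_l(\theta)$ iff $S_j(\theta)<S_l(\theta)$, or $S_j(\theta)=S_l(\theta)$ and $\pi(j)<\pi(l)$. Rank: $R(\theta)=1+\sum_{j=1}^{m-1}\mathbb{I}\big(S_0(\theta)\prec_\pi S_j(\theta)\big)$. *)

From HB Require Import structures.
From mathcomp Require Import all_boot all_order all_algebra.
From mathcomp Require Import fingroup perm.
From mathcomp Require Import all_classical all_reals all_analysis.
Set Implicit Arguments. Unset Strict Implicit. Unset Printing Implicit Defensive.
Import Order.TTheory GRing.Theory Num.Theory.
Local Open Scope ring_scope.

Section MedianOfMeans.
Variable R : realType.

(* med(y_1..y_k) = y_(k/2) if k even, y_(floor(k/2)+1) if k odd
   (1-based order statistics; nth below is 0-based). *)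
Definition median (s : seq R) : R :=
  let k := size s in
  nth 0 (sort <=%R s) (if odd k then k./2 else k./2 - 1)%N.

(* B_l = { i in [n] : i = l mod k }, with i in [n] represented by i' : 'I_n,
   i = i'+1, and l in {1,..,k}. *)
Definition block (n k l : nat) : seq 'I_n :=
  [seq i : 'I_n <- enum 'I_n | ((nat_of_ord i).+1 %% k == l %% k)%N].

Definition block_mean (n k : nat) (x : 'I_n -> R) (l : nat) : R :=
  (size (block n k l))%:R^-1 * \sum_(i <- block n k l) x i.

Definition mom (n k : nat) (x : 'I_n -> R) : R :=
  median [seq block_mean k x l | l <- iota 1 k].

Definition resample (n : nat) (a : 'I_n -> R) (x : 'I_n -> R) (theta : R) : 'I_n -> R :=
  fun i => a i * (x i - theta) + theta.

Definition perm_at (m : nat) (s : {perm 'I_m}) (j : nat) : nat :=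
  if (insub j : option 'I_m) is Some o then nat_of_ord (s o) else j.

Definition prec_tb (a b : R) (pa pb : nat) : bool :=
  (a < b) || ((a == b) && (pa < pb)%N).

Definition S0 (n k : nat) (x : 'I_n -> R) (theta : R) : R := mom k x - theta.

(* S_{j+1}(theta), for j : 'I_(m-1) (resample index j+1 in [m-1]) *)
Definition Sj (n k m : nat) (x : 'I_n -> R) (alpha : 'I_n -> 'I_m.-1 -> R)
  (theta : R) (j : 'I_m.-1) : R :=
  mom k (resample (fun i => alpha i j) x theta) - theta.

Definition rank (n k m : nat) (x : 'I_n -> R) (alpha : 'I_n -> 'I_m.-1 -> R)
  (pi : {perm 'I_m}) (theta : R) : nat :=
  (1 + \sum_(j < m.-1)
        prec_tb (S0 k x theta) (Sj k x alpha theta j) (perm_at pi 0) (perm_at pi j.+1))%N.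

End MedianOfMeans.

From HB Require Import structures.
From mathcomp Require Import all_boot all_order all_algebra.
From mathcomp Require Import fingroup perm.
From mathcomp Require Import all_classical all_reals all_analysis.
From mathcomp Require Import measurable_realfun.
From mathcomp Require Import zify ring lra.
Import Order.TTheory GRing.Theory Num.Theory.
Local Open Scope classical_set_scope.
Local Open Scope ring_scope.
Set Implicit Arguments. Unset Strict Implicit. Unset Printing Implicit Defensive.

(* Write Y = X - mu.  Almost surely every alpha_{i,j} is +-1, and then the reference
   statistics are S_j(mu) = g (eps_j Y), where g is the median of means centred at mu,
   eps_0 = 1 and eps_j = alpha_j act on Y by coordinatewise sign flips.  Coordinatewise
   symmetry and independence make the joint law of (Y, alpha, pi) invariant under
   Y |-> e Y for every fixed sign vector e, so the probability in question is its
   average over the 2^n flips e.  For fixed data, (e, alpha) |-> (e, alpha_1 e, ...,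
   alpha_{m-1} e) is a bijection onto m-tuples of sign vectors, so this average counts,
   over all such m-tuples and all permutations, how often the first of m values lies
   among the r smallest for the tie-broken strict total order; as the m positions are
   exchangeable, this happens with frequency r/m. *)

Lemma sum_ge_injective_ord (m r : nat) (rho : 'I_m -> nat) :
  injective rho -> (forall i, rho i < m)%N -> (r <= m)%N ->
  (\sum_(i < m) (m - r <= rho i)%N)%N = r.
Proof.
move=> rho_inj rho_lt r_le_m.
pose f i := Ordinal (rho_lt i).
have f_inj : injective f by move=> i j /(congr1 val) /rho_inj.
transitivity (\sum_(i < m) (m - r <= i)%N)%N.
  by rewrite [RHS](reindex_inj f_inj).
rewrite -(big_mkord xpredT (fun i => (m - r <= i)%N : nat)).
rewrite (@big_cat_nat _ _ _ (m - r)) ?leq_subr //= big_nat_cond big1; last first.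
  by move=> i /andP[/andP[_ i_lt] _]; rewrite leqNgt i_lt.
rewrite add0n big_nat_cond (eq_bigr (fun _ => 1%N)); last first.
  by move=> i /andP[/andP[-> _] _].
rewrite -big_nat_cond sum_nat_const_nat; lia.
Qed.

Lemma sum_ge_count_strict_total (m r : nat) (p : rel 'I_m) :
  irreflexive p -> (forall i l, i != l -> p i l || p l i) -> transitive p ->
  (r <= m)%N ->
  (\sum_(i < m) (m - r <= \sum_(l < m) p i l)%N)%N = r.
Proof.
move=> p_irr p_total p_trans r_le_m.
pose rho i := #|[pred l | p i l]|.
have rhoE i : (\sum_(l < m) p i l)%N = rho i.
  by rewrite /rho -sum1_card [RHS]big_mkcond; apply: eq_bigr => l _; rewrite inE; case: (p i l).
have rho_mono i l : p i l -> (rho l < rho i)%N.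
  move=> pil; apply/proper_card/properP; split.
    by apply/fintype.subsetP => q; rewrite !inE; exact: p_trans.
  by exists l; rewrite !inE ?p_irr.
under eq_bigr do rewrite rhoE.
apply: sum_ge_injective_ord => // [i l rho_il|i].
  apply/eqP; apply: contraT => /p_total /orP[] /rho_mono; by rewrite rho_il ltnn.
rewrite -[X in (_ < X)%N]card_ord; apply/proper_card/properP; split.
  exact/fintype.subsetP.
by exists i => //; rewrite inE p_irr.
Qed.

Section tie_broken_rank.
Variable R : realType.

Lemma prec_tb_irr (x : R) (a : nat) : prec_tb x x a a = false.
Proof. by rewrite /prec_tb ltxx eqxx ltnn. Qed.

Lemma prec_tb_total (x y : R) (a b : nat) : a != b -> prec_tb x y a b || prec_tb y x b a.
Proof. by move=> a_neq_b; rewrite /prec_tb; case: (ltgtP x y) => //= _; rewrite -neq_ltn. Qed.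

Lemma prec_tb_trans (x y z : R) (a b c : nat) :
  prec_tb x y a b -> prec_tb y z b c -> prec_tb x z a c.
Proof.
rewrite /prec_tb => /orP[xy|/andP[/eqP<- ab]] /orP[yz|/andP[/eqP<- bc]].
- by rewrite (lt_trans xy yz).
- by rewrite xy.
- by rewrite yz.
- by rewrite eqxx (ltn_trans ab bc) orbT.
Qed.

Definition rank_tb (m : nat) (c : 'I_m -> R) (s : {perm 'I_m}) (i : 'I_m) : nat :=
  \sum_(l < m) prec_tb (c i) (c l) (s i) (s l).

Lemma sum_rank_tb_ge (m r : nat) (c : 'I_m -> R) (s : {perm 'I_m}) : (r <= m)%N ->
  (\sum_(i < m) (m - r < 1 + rank_tb c s i)%N)%N = r.
Proof.
move=> r_le_m; rewrite -[RHS](@sum_ge_count_strict_total m r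
  (fun i l => prec_tb (c i) (c l) (s i) (s l))) //.
- by move=> i; exact: prec_tb_irr.
- by move=> i l /eqP i_neq_l; apply/prec_tb_total/eqP => /val_inj/perm_inj.
- by move=> ? ? ?; exact: prec_tb_trans.
Qed.

Lemma rank_tb_ord0 (m' : nat) (c : 'I_m'.+1 -> R) (s : {perm 'I_m'.+1}) :
  rank_tb c s ord0 =
  (\sum_(j < m') prec_tb (c ord0) (c (lift ord0 j)) (s ord0) (s (lift ord0 j)))%N.
Proof. by rewrite /rank_tb big_ord_recl prec_tb_irr. Qed.

Section exchangeable.
Variables (W : finType) (v : W -> R) (m : nat).

Lemma sum_rank_tb_tperm (Q : pred nat) (i l : 'I_m) :
  (\sum_(c : {ffun 'I_m -> W}) \sum_(s : {perm 'I_m}) Q (rank_tb (v \o c) s i))%N =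
  (\sum_(c : {ffun 'I_m -> W}) \sum_(s : {perm 'I_m}) Q (rank_tb (v \o c) s l))%N.
Proof.
pose t := tperm i l.
rewrite !pair_big /=.
pose h (p : {ffun 'I_m -> W} * {perm 'I_m}) := ([ffun q => p.1 (t q)], (t * p.2)%g).
have h_inj : injective h.
  move=> [c1 s1] [c2 s2] [/ffunP c12 /mulgI ->]; congr (_, _).
  by apply/ffunP => q; have := c12 (t q); rewrite !ffunE tpermK.
rewrite (reindex_inj h_inj); apply: eq_bigr => -[c s] _ /=.
rewrite /rank_tb /= ffunE permM tpermL.
rewrite [in RHS](reindex_inj (@perm_inj _ t)); congr (Q _); apply: eq_bigr => q _.
by rewrite ffunE permM.
Qed.

Lemma sum_rank_tb_ge_at (r : nat) (i : 'I_m) : (r <= m)%N ->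
  (m * \sum_(c : {ffun 'I_m -> W}) \sum_(s : {perm 'I_m}) (m - r < 1 + rank_tb (v \o c) s i)%N)%N
  = (r * #|W| ^ m * m`!)%N.
Proof.
move=> r_le_m.
pose S l := (\sum_(c : {ffun 'I_m -> W}) \sum_(s : {perm 'I_m})
  (m - r < 1 + rank_tb (v \o c) s l)%N)%N.
have S_const l : S i = S l := sum_rank_tb_tperm (fun x => (m - r < 1 + x)%N) i l.
rewrite -[X in (X * _)%N]card_ord -sum_nat_const.
transitivity (\sum_(l < m) S l)%N; first by apply: eq_bigr => l _; exact: S_const.
rewrite exchange_big /= (eq_bigr (fun _ => (r * m`!)%N)); last first.
  move=> c _; rewrite exchange_big /= (eq_bigr (fun _ => r)).
    by rewrite sum_nat_const card_Sn mulnC.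
  by move=> s _; exact: sum_rank_tb_ge.
by rewrite sum_nat_const card_ffun card_ord mulnCA mulnA.
Qed.

End exchangeable.

Lemma sum_rank_shift (W : finType) (op : W -> W -> W) (v : W -> R) (m' r : nat) :
  (forall e, injective (op ^~ e)) -> (r <= m'.+1)%N ->
  (m'.+1 * \sum_(e : W) \sum_(a : {ffun 'I_m' -> W}) \sum_(s : {perm 'I_m'.+1})
     (m'.+1 - r < 1 + \sum_(j < m')
        prec_tb (v e) (v (op (a j) e)) (s ord0) (s (lift ord0 j)))%N)%N
  = (r * #|W| ^ m'.+1 * m'.+1`!)%N.
Proof.
move=> op_inj r_le_m; rewrite -(sum_rank_tb_ge_at v ord0 r_le_m); congr (_ * _)%N.
transitivity (\sum_(e : W) \sum_(b : {ffun 'I_m' -> W}) \sum_(s : {perm 'I_m'.+1})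
    (m'.+1 - r < 1 + \sum_(j < m')
       prec_tb (v e) (v (b j)) (s ord0) (s (lift ord0 j)))%N)%N.
  apply: eq_bigr => e _.
  pose shift (a : {ffun 'I_m' -> W}) := [ffun j => op (a j) e].
  have shift_inj : injective shift.
    by move=> a1 a2 /ffunP a12; apply/ffunP => j; have := a12 j; rewrite !ffunE => /op_inj.
  rewrite [RHS](reindex_inj shift_inj); apply: eq_bigr => a _; apply: eq_bigr => s _.
  by congr (_ < 1 + _)%N; apply: eq_bigr => j _; rewrite ffunE.
pose h (c : {ffun 'I_m'.+1 -> W}) := (c ord0, [ffun j => c (lift ord0 j)]).
pose h' (p : W * {ffun 'I_m' -> W}) : {ffun 'I_m'.+1 -> W} :=
  [ffun l => if unlift ord0 l is Some j then p.2 j else p.1].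
have h_bij : bijective h.
  exists h' => [c|[e b]].
    by apply/ffunP => l; rewrite ffunE /=; case: unliftP => [j|] ->; rewrite ?ffunE.
  rewrite /h /h' /= ffunE unlift_none; congr (_, _).
  by apply/ffunP => j; rewrite !ffunE liftK.
rewrite pair_big (reindex h) /=; last exact: onW_bij.
apply: eq_bigr => c _; apply: eq_bigr => s _; rewrite rank_tb_ord0 /=.
by congr (_ < 1 + _)%N; apply: eq_bigr => j _; rewrite ffunE.
Qed.

End tie_broken_rank.

Lemma sorted_nth_count d (T : orderType d) (x0 : T) (s : seq T) (p : pred T) (j : nat) :
  sorted <=%O s -> {homo p : x y / (y <= x)%O >-> x ==> y} -> (j < size s)%N ->
  p (nth x0 s j) = (j < count p s)%N.
Proof.
elim: s j => [|x s IH] j //= x_s p_down.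
have s_sorted : sorted <=%O s := path_sorted x_s.
have x_le : all (fun y => x <= y)%O s := order_path_min le_trans x_s.
have count0 : ~~ p x -> count p s = 0%N.
  move=> px; apply/eqP; rewrite -leqn0 leqNgt -has_count; apply/hasPn => y ys.
  by apply: contra px => py; exact: implyP (p_down _ _ (allP x_le y ys)) py.
case: j => [|j] /= j_lt; first by case px: (p x) => //=; rewrite count0 ?px.
rewrite IH //; case px: (p x) => /=; first by rewrite add1n ltnS.
by rewrite count0 ?px.
Qed.

Section finite_measurability.
Context d (T : measurableType d).

Lemma measurable_forall (I : finType) (F : I -> set T) :
  (forall i, measurable (F i)) -> measurable [set t | forall i, F i t].
Proof.
move=> mF; rewrite (_ : [set t | _] = \big[setI/setT]_(i <- enum I) F i).
  by apply: bigsetI_measurable => i _.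
apply/seteqP; split => t /=.
  by move=> Ft; rewrite -bigcap_seq => i _; exact: Ft.
by rewrite -bigcap_seq => Ft i; apply: Ft; rewrite /= mem_enum.
Qed.

Lemma measurable_exists (I : finType) (F : I -> set T) :
  (forall i, measurable (F i)) -> measurable [set t | exists i, F i t].
Proof.
move=> mF; rewrite (_ : [set t | _] = \big[setU/set0]_(i <- enum I) F i).
  by apply: bigsetU_measurable => i _.
apply/seteqP; split => t /=.
  by move=> [i Fi]; rewrite -bigcup_seq; exists i => //; rewrite /= mem_enum.
by rewrite -bigcup_seq => -[i _ Fi]; exists i.
Qed.

Lemma measurable_fun_sumn (I : Type) (s : seq I) (P : pred I) (h : I -> T -> nat) :
  (forall i, measurable_fun setT (h i)) ->
  measurable_fun setT (fun t => \sum_(i <- s | P i) h i t)%N.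
Proof.
move=> mh; elim: s => [|x s IH].
  by under eq_fun do rewrite big_nil; exact: measurable_cst.
under eq_fun do rewrite big_cons; case: (P x) => //.
exact: measurable_fun_addn.
Qed.

Lemma measurable_fun_nat_of_bool (b : T -> bool) : measurable_fun setT b ->
  measurable_fun setT (fun t => nat_of_bool (b t)).
Proof. by move=> mb; exact: (measurableT_comp (f := nat_of_bool)). Qed.

Lemma measurable_fun_count (I : Type) (s : seq I) (b : I -> T -> bool) :
  (forall i, measurable_fun setT (b i)) ->
  measurable_fun setT (fun t => count (b ^~ t) s).
Proof.
move=> mb; elim: s => [|x s IH] /=; first exact: measurable_cst.
by apply: measurable_fun_addn => //; exact: measurable_fun_nat_of_bool.
Qed.

Lemma measurable_nat_preimage (h : T -> nat) (A : set nat) :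
  measurable_fun setT h -> measurable [set t | A (h t)].
Proof. by move=> mh; rewrite -[X in measurable X]setTI; exact: mh. Qed.

Context (R : realType).

Lemma measurable_fun_nth_sort (F : nat -> T -> R) (L : seq nat) (j : nat) :
  (forall l, measurable_fun setT (F l)) ->
  measurable_fun setT (fun t => nth 0 (sort <=%R [seq F l t | l <- L]) j).
Proof.
move=> mF; have [j_lt|j_ge] := ltnP j (size L); last first.
  under eq_fun do rewrite nth_default ?size_sort ?size_map //.
  exact: measurable_cst.
apply: (measurability _ (RGenInftyO.measurableE R)) => // _ [_ [c ->] <-].
rewrite (_ : _ `&` _ = [set t | (j < count (fun l => (F l t < c)%R) L)%N]).
  apply: (measurable_nat_preimage (fun x => j < x)%N); apply: measurable_fun_count => l.
  by apply: measurable_fun_ltr => //; exact: measurable_cst.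
have lt_c_down : {homo (fun x => x < c) : x y / y <= x >-> x ==> y}.
  by move=> x y yx; apply/implyP; exact: le_lt_trans.
have nth_lt_c t : ((sort <=%R [seq F l t | l <- L])`_j < c) =
    (j < count (fun l => (F l t < c)%R) L)%N.
  by rewrite (sorted_nth_count _ _ lt_c_down) ?size_sort ?size_map ?count_sort ?count_map.
by apply/seteqP; split => t /=; rewrite in_itv /= nth_lt_c; [case|].
Qed.

End finite_measurability.

(* [g_sigma_algebraType] needs a pointed carrier. *)
Definition vec (R : realType) (n : nat) := 'I_n -> R.
HB.instance Definition _ (R : realType) (n : nat) := Choice.on (vec R n).
HB.instance Definition _ (R : realType) (n : nat) := isPointed.Build (vec R n) (fun _ => 0).

Definition rectangles (R : realType) (n : nat) : set (set (vec R n)) :=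
  [set [set y | forall i, B i (y i)] | B in [set B | forall i : 'I_n, measurable (B i)]].
Arguments rectangles : clear implicits.

Definition vecR (R : realType) (n : nat) := g_sigma_algebraType (rectangles R n).

Section vector_measurability.
Context (R : realType) (n : nat).

Lemma measurable_fun_coord (i : 'I_n) : measurable_fun setT (fun y : vecR R n => y i).
Proof.
move=> _ B mB; rewrite setTI; apply: sub_sigma_algebra.
exists (fun l => if l == i then B else setT).
  by move=> l; case: (l == i).
apply/seteqP; split => y /=; first by move/(_ i); rewrite eqxx.
by move=> yB l; case: eqP => [->|].
Qed.

Lemma measurable_fun_vecR d (T : measurableType d) (h : 'I_n -> T -> R) :
  (forall i, measurable_fun setT (h i)) ->
  measurable_fun setT ((fun t i => h i t) : T -> vecR R n).
Proof.
move=> mh; apply: (@measurability _ _ T (vecR R n) setT _ (rectangles R n) erefl).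
move=> _ [_ [B mB <-] <-]; rewrite setTI.
by apply: measurable_forall => i; rewrite -[X in measurable X]setTI; exact: mh.
Qed.

End vector_measurability.

Lemma measurable_fun_mom d (T : measurableType d) (R : realType) (n k : nat)
    (h : 'I_n -> T -> R) :
  (forall i, measurable_fun setT (h i)) -> measurable_fun setT (fun t => mom k (h^~ t)).
Proof.
move=> mh; rewrite /mom /median /=; under eq_fun do rewrite size_map size_iota.
apply: measurable_fun_nth_sort => l; rewrite /block_mean.
apply: measurable_funM; first exact: measurable_cst.
by apply: measurable_sum => i; exact: mh.
Qed.

Lemma measurable_rank_gt d (T : measurableType d) (R : realType) (m' r0 : nat)
    (f0 : T -> R) (f : 'I_m' -> T -> R) (p0 : nat) (p : 'I_m' -> nat) :
  measurable_fun setT f0 -> (forall j, measurable_fun setT (f j)) ->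
  measurable [set t | (r0 < 1 + \sum_(j < m') prec_tb (f0 t) (f j t) p0 (p j))%N].
Proof.
move=> mf0 mf; apply: (measurable_nat_preimage (fun x => r0 < x)%N).
apply: measurable_fun_addn; first exact: measurable_cst.
apply: measurable_fun_sumn => j; apply: measurable_fun_nat_of_bool.
apply: measurable_or; first exact: measurable_fun_ltr.
by apply: measurable_and; [exact: measurable_fun_eqr | exact: measurable_cst].
Qed.

Section measure_preimage_from_rectangles.
Context (R : realType) d (T : measurableType d) (P : probability T R) (n : nat).
Variables (Y Z : T -> vecR R n) (U : set T) (c : {nonneg R}).
Hypotheses (mY : measurable_fun setT Y) (mZ : measurable_fun setT Z) (mU : measurable U).
Hypothesis rect_eq : forall B : 'I_n -> set R, (forall i, measurable (B i)) ->
  P (Y @^-1` [set y | forall i, B i (y i)] `&` U) =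
  ((c%:num)%:E * P (Z @^-1` [set y | forall i, B i (y i)]))%E.

Lemma measure_preimageI_scale (A : set (vecR R n)) : measurable A ->
  P (Y @^-1` A `&` U) = ((c%:num)%:E * P (Z @^-1` A))%E.
Proof.
move=> mA.
(* The pushforward is a measure only given the measurability proof, so its instance is
   not canonical and has to be named. *)
pose m1 := measure_function_pushforward__canonical__measure_function_Measure (mrestr P mU) mY.
pose m2 := mscale c (measure_function_pushforward__canonical__measure_function_Measure P mZ).
apply: (@measure_unique _ R (vecR R n) (rectangles R n) (fun _ => setT) erefl _ _ _ m1 m2 _ _ A mA).
- move=> _ _ [B1 mB1 <-] [B2 mB2 <-].
  exists (fun i => B1 i `&` B2 i); first by move=> i; exact: measurableI.
  by apply/seteqP; split => y /= => [yB|[yB1 yB2] i]; [split => i; case: (yB i)|].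
- by move=> _; exists (fun _ => setT) => //; apply/seteqP.
- by apply/seteqP; split => // y _; exists 0%N.
- by move=> _ [B mB <-]; exact: rect_eq.
- move=> _; rewrite /m1 /= /pushforward /mrestr.
  apply: (le_lt_trans (probability_le1 _ _)); last exact: ltry.
  by apply: measurableI => //; rewrite -[X in measurable X]setTI; exact: mY.
Qed.

End measure_preimage_from_rectangles.

Lemma measure_bigsetU_disjoint d (T : measurableType d) (R : realType)
    (mu : {measure set T -> \bar R}) (I : choiceType) (s : seq I) (F : I -> set T) :
  uniq s -> (forall i, measurable (F i)) ->
  (forall i j, i != j -> F i `&` F j = set0) ->
  mu (\big[setU/set0]_(i <- s) F i) = (\sum_(i <- s) mu (F i))%E.
Proof.
move=> + mF F_disj; elim: s => [|x s IH] /=; first by rewrite !big_nil measure0.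
move=> /andP[x_notin_s s_uniq]; rewrite !big_cons.
have mUs : measurable (\big[setU/set0]_(i <- s) F i) by apply: bigsetU_measurable => i _.
have Fx_disj : F x `&` \big[setU/set0]_(i <- s) F i = set0.
  apply/seteqP; split => t // [Fx]; rewrite -bigcup_seq => -[i /= i_in_s Fi].
  have : (F x `&` F i) t by [].
  by rewrite F_disj //; apply: contraNneq x_notin_s => ->.
by rewrite measureU //; congr (_ + _)%E; exact: IH.
Qed.

Lemma sum_probability_count_const d (T : measurableType d) (R : realType)
    (P : probability T R) (J : finType) (b : J -> T -> bool) (K : R) :
  (forall j, measurable [set t | b j t]) ->
  (forall t, (\sum_(j : J) b j t)%N%:R = K) ->
  (\sum_(j : J) P [set t | b j t] = K%:E)%E.
Proof.
move=> mb count_K.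
transitivity (\int[P]_t (\sum_(j : J) (\1_[set t | b j t] t)%:E))%E.
  rewrite ge0_integral_sum //.
  - by apply: eq_bigr => j _; rewrite integral_indic // setIT.
  - by move=> j; apply/measurable_EFinP; exact: measurable_indic.
transitivity (\int[P]_t (cst K%:E t))%E.
  apply: eq_integral => t _; rewrite sumEFin /= -(count_K t) natr_sum; congr (_%:E).
  apply: eq_bigr => j _; rewrite indicE; congr (_%:R).
  by case: (boolP (b j t)) => bjt; [rewrite mem_set | rewrite memNset //; apply/negP].
by rewrite integral_cst //= probability_setT mule1.
Qed.

Lemma probability_setI_full d (T : measurableType d) (R : realType) (P : probability T R)
    (A G : set T) :
  measurable A -> measurable G -> P G = 1%E -> P (A `&` G) = P A.
Proof.
move=> mA mG PG1; rewrite [RHS](measureDI P mA mG) -[LHS]add0e; congr (_ + _)%E.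
have PnG : P (~` G) = 0%E by rewrite probability_setC // PG1 subee.
apply/esym/eqP; rewrite -measure_le0 -PnG; apply: le_measure; rewrite ?inE.
- exact: measurableD.
- exact: measurableC.
- by move=> t [].
Qed.

Definition bsign {R : pzRingType} (b : bool) : R := if b then -1 else 1.

Lemma bsign_inj (R : realDomainType) : injective (@bsign R).
Proof. by case=> -[] //= h; exfalso; lra. Qed.

Definition sign_flip (R : pzRingType) (n : nat) (e : {ffun 'I_n -> bool}) (y : 'I_n -> R) :
  'I_n -> R := fun i => bsign (e i) * y i.

Lemma sign_flipD (R : pzRingType) (n : nat) (a e : {ffun 'I_n -> bool}) (y : 'I_n -> R) :
  sign_flip a (sign_flip e y) = sign_flip [ffun i => a i (+) e i] y.
Proof.
apply: funext => i; rewrite /sign_flip /bsign ffunE.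
by case: (a i); case: (e i); rewrite /= ?mulN1r ?mul1r ?opprK.
Qed.

Definition mom_dev (R : realType) (n k : nat) (mu : R) (y : 'I_n -> R) : R :=
  mom k (fun i => y i + mu) - mu.

Definition flip_rank (R : realType) (n k m' : nat) (mu : R) (y : 'I_n -> R)
    (a : {ffun 'I_m' -> {ffun 'I_n -> bool}}) (s : {perm 'I_m'.+1}) : nat :=
  (1 + \sum_(j < m') prec_tb (mom_dev k mu y) (mom_dev k mu (sign_flip (a j) y))
                             (s ord0) (s (lift ord0 j)))%N.

Lemma sum_flip_rank (R : realType) (n k m' r : nat) (mu : R) (y : 'I_n -> R) :
  (r <= m'.+1)%N ->
  (m'.+1 * \sum_(e : {ffun 'I_n -> bool}) \sum_(a : {ffun 'I_m' -> {ffun 'I_n -> bool}})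
     \sum_(s : {perm 'I_m'.+1}) (m'.+1 - r < flip_rank k mu (sign_flip e y) a s)%N)%N
  = (r * (2 ^ n) ^ m'.+1 * m'.+1`!)%N.
Proof.
move=> r_le_m.
pose xor (a e : {ffun 'I_n -> bool}) := [ffun i => a i (+) e i].
have xor_inj e : injective (xor ^~ e).
  move=> a1 a2 /ffunP a12; apply/ffunP => i; have := a12 i; rewrite !ffunE.
  by case: (a1 i); case: (a2 i); case: (e i).
have := sum_rank_shift (fun e => mom_dev k mu (sign_flip e y)) xor_inj r_le_m.
rewrite card_ffun card_bool card_ord => <-; congr (_ * _)%N.
apply: eq_bigr => e _; apply: eq_bigr => a _; apply: eq_bigr => s _.
by rewrite /flip_rank; congr (_ < 1 + _)%N; apply: eq_bigr => j _; rewrite sign_flipD.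
Qed.

Lemma perm_at_ord (m : nat) (s : {perm 'I_m}) (o : 'I_m) : perm_at s o = s o.
Proof. by rewrite /perm_at valK. Qed.

Lemma rank_centered (R : realType) (n k m' : nat) (x : 'I_n -> R)
    (al : 'I_n -> 'I_m' -> R) (s : {perm 'I_m'.+1}) (theta : R) :
  rank (m := m'.+1) k x al s theta =
  (1 + \sum_(j < m') prec_tb (mom_dev k theta (fun i => (x i - theta)%R))
         (mom_dev k theta (fun i => (al i j * (x i - theta))%R)) (s ord0) (s (lift ord0 j)))%N.
Proof.
rewrite /rank; congr (1 + _)%N; apply: eq_bigr => j _.
have s0 : perm_at s 0 = s ord0 := perm_at_ord s ord0.
have sj : perm_at s j.+1 = s (lift ord0 j) := perm_at_ord s (lift ord0 j).
rewrite s0 sj /S0 /Sj /mom_dev /resample.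
by congr (prec_tb (mom k _ - _) _ _ _); apply: funext => i; rewrite subrK.
Qed.

Section resampled_rank.
Context (R : realType) d (T : measurableType d) (P : probability T R).
Variables (n k m' r : nat) (X : 'I_n -> T -> R) (alpha : 'I_n -> 'I_m' -> T -> R)
  (pi : T -> {perm 'I_m'.+1}) (mu : R).
Hypotheses (r_le_m : (r <= m'.+1)%N)
  (mX : forall i, measurable_fun setT (X i))
  (malpha : forall i j, measurable_fun setT (alpha i j))
  (mpi : forall s, measurable (pi @^-1` [set s]))
  (X_symmetric : forall i (B : set R), measurable B ->
     P ((fun t => X i t - mu) @^-1` B) = P ((fun t => mu - X i t) @^-1` B))
  (alpha1 : forall i j, P (alpha i j @^-1` [set 1]) = (2^-1)%:E)
  (alphaN1 : forall i j, P (alpha i j @^-1` [set -1]) = (2^-1)%:E)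
  (pi_uniform : forall s, P (pi @^-1` [set s]) = ((m'.+1`!)%:R^-1)%:E)
  (independent : forall (B : 'I_n -> set R) (C : 'I_n -> 'I_m' -> set R)
       (S : set {perm 'I_m'.+1}),
     (forall i, measurable (B i)) -> (forall i j, measurable (C i j)) ->
     P [set t | (forall i, B i (X i t)) /\ (forall i j, C i j (alpha i j t)) /\ S (pi t)]
     = ((\prod_(i < n) P (X i @^-1` B i))
        * (\prod_(i < n) \prod_(j < m') P (alpha i j @^-1` C i j))
        * P (pi @^-1` S))%E).

Let Y (t : T) : vecR R n := fun i => X i t - mu.

Let sign_cell (a : {ffun 'I_m' -> {ffun 'I_n -> bool}}) (s : {perm 'I_m'.+1}) :=
  [set t | (forall i j, alpha i j t = bsign (a j i)) /\ pi t = s].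

Let rank_set (a : {ffun 'I_m' -> {ffun 'I_n -> bool}}) (s : {perm 'I_m'.+1}) : set (vecR R n) :=
  [set y | (m'.+1 - r < flip_rank k mu y a s)%N].

Let rank_event :=
  [set t | (m'.+1 - r < rank (m := m'.+1) k (fun i => X i t) (fun i j => alpha i j t) (pi t) mu)%N].

Let mY : measurable_fun setT Y.
Proof.
apply: measurable_fun_vecR => i.
by apply: measurable_funB => //; exact: measurable_cst.
Qed.

Let measurable_sign_flip (e : {ffun 'I_n -> bool}) :
  measurable_fun setT (fun y : vecR R n => sign_flip e y : vecR R n).
Proof.
apply: measurable_fun_vecR => i.
by apply: measurable_funM; [exact: measurable_cst | exact: measurable_fun_coord].
Qed.

Let measurable_mom_dev : measurable_fun setT (fun y : vecR R n => mom_dev k mu y).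
Proof.
apply: measurable_funB; last exact: measurable_cst.
apply: measurable_fun_mom => i.
by apply: measurable_funD; [exact: measurable_fun_coord | exact: measurable_cst].
Qed.

Let measurable_sign_cell a s : measurable (sign_cell a s).
Proof.
rewrite (_ : sign_cell a s =
  [set t | forall i j, alpha i j t = bsign (a j i)] `&` pi @^-1` [set s]) //.
apply: measurableI => //.
apply: (measurable_forall (F := fun i => [set t | forall j, alpha i j t = bsign (a j i)])) => i.
apply: (measurable_forall (F := fun j => alpha i j @^-1` [set bsign (a j i)])) => j.
by rewrite -[X in measurable X]setTI; exact: malpha.
Qed.

Let measurable_rank_set a s : measurable (rank_set a s).
Proof.
apply: measurable_rank_gt => [|j]; first exact: measurable_mom_dev.
exact: measurableT_comp measurable_mom_dev (measurable_sign_flip (a j)).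
Qed.

Let rank_on_sign_cell a s t : sign_cell a s t ->
  rank (m := m'.+1) k (fun i => X i t) (fun i j => alpha i j t) (pi t) mu =
  flip_rank k mu (Y t) a s.
Proof.
move=> [alpha_a <-]; rewrite rank_centered /flip_rank; congr (1 + _)%N.
apply: eq_bigr => j _; congr (prec_tb _ (mom_dev _ _ _) _ _).
by apply: funext => i; rewrite /sign_flip alpha_a.
Qed.

Let measurable_rank_event : measurable rank_event.
Proof.
rewrite (_ : rank_event = [set t | exists s, pi t = s /\ (m'.+1 - r < 1 + \sum_(j < m')
    prec_tb (mom_dev k mu (Y t)) (mom_dev k mu (fun i => (alpha i j t * Y t i)%R))
      (s ord0) (s (lift ord0 j)))%N]).
  apply: measurable_exists => s; apply: measurableI; first exact: mpi.
  apply: measurable_rank_gt => [|j]; first exact: measurableT_comp measurable_mom_dev mY.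
  apply: measurableT_comp measurable_mom_dev _; apply: measurable_fun_vecR => i.
  by apply: measurable_funM => //; apply: measurable_funB => //; exact: measurable_cst.
apply/seteqP; split => t; rewrite /rank_event /= rank_centered; last by case=> s [->].
by exists (pi t).
Qed.

Let signs_pm1 := [set t | forall i j, alpha i j t = 1 \/ alpha i j t = -1].

Let measurable_pm1 : measurable [set x : R | x = 1 \/ x = -1].
Proof. exact: measurableU (measurable_set1 1) (measurable_set1 (-1)). Qed.

Let measurable_signs_pm1 : measurable signs_pm1.
Proof.
apply: (measurable_forall
  (F := fun i => [set t | forall j, alpha i j t = 1 \/ alpha i j t = -1])) => i.
apply: (measurable_forall (F := fun j => alpha i j @^-1` [set x | x = 1 \/ x = -1])) => j.
by rewrite -[X in measurable X]setTI; exact: malpha.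
Qed.

Let prob_signs_pm1 : P signs_pm1 = 1%E.
Proof.
have prob_pm1 i j : P (alpha i j @^-1` [set x | x = 1 \/ x = -1]) = 1%E.
  rewrite (_ : _ @^-1` _ = alpha i j @^-1` [set 1] `|` alpha i j @^-1` [set -1]) //.
  rewrite measureU.
  - transitivity ((2^-1)%:E + (2^-1)%:E : \bar R)%E.
      by congr (_ + _)%E; [exact: alpha1 | exact: alphaN1].
    by rewrite -EFinD; congr (_%:E); lra.
  - by rewrite -[X in measurable X]setTI; exact: malpha.
  - by rewrite -[X in measurable X]setTI; exact: malpha.
  - by apply/seteqP; split => t // [/= ->]; lra.
have := @independent (fun _ => setT) (fun _ _ => [set x | x = 1 \/ x = -1]) setT
  (fun _ => measurableT) (fun _ _ => measurable_pm1).
rewrite (_ : [set t | _] = signs_pm1); last first.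
  by apply/seteqP; split => t /= => [[_ []]|alpha_pm1] //.
move=> ->; rewrite !big1 ?preimage_setT ?probability_setT ?mule1 // => i _.
  by rewrite big1.
by rewrite preimage_setT probability_setT.
Qed.

Let cell (x : {ffun 'I_m' -> {ffun 'I_n -> bool}} * {perm 'I_m'.+1}) :=
  Y @^-1` rank_set x.1 x.2 `&` sign_cell x.1 x.2.

Let rank_event_signs_cells :
  rank_event `&` signs_pm1 = \big[setU/set0]_(x <- index_enum _) cell x.
Proof.
rewrite -bigcup_seq; apply/seteqP; split => t.
  move=> [rank_gt alpha_pm1].
  pose a := [ffun j => [ffun i => alpha i j t == -1]].
  have t_cell : sign_cell a (pi t) t.
    split=> // i j; rewrite !ffunE /bsign.
    by case: (alpha_pm1 i j) => ->; rewrite ?eqxx // ifF //; apply/eqP; lra.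
  exists (a, pi t); first by rewrite /= mem_index_enum.
  by split => //; rewrite /rank_set /= -(rank_on_sign_cell t_cell).
move=> [[a s] _ [rank_gt t_cell]]; split.
  by rewrite /rank_event /= (rank_on_sign_cell t_cell).
by move=> i j; case: t_cell => -> _; rewrite /bsign; case: (a j i); [right|left].
Qed.

Let prob_rank_event_cells : P rank_event = (\sum_x P (cell x))%E.
Proof.
rewrite -(probability_setI_full measurable_rank_event measurable_signs_pm1 prob_signs_pm1).
rewrite rank_event_signs_cells measure_bigsetU_disjoint //.
- exact: index_enum_uniq.
- move=> x; apply: measurableI => //.
  by rewrite -[X in measurable X]setTI; exact: mY.
move=> [a1 s1] [a2 s2] neq; apply/seteqP; split => t //= [[_ [alpha_a1 s1E]] [_ [alpha_a2 s2E]]].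
suff [a12 s12] : a1 = a2 /\ s1 = s2 by move: neq; rewrite a12 s12 eqxx.
split; last by move: s1E s2E => /= -> ->.
by apply/ffunP => j; apply/ffunP => i; apply: (@bsign_inj R); rewrite -alpha_a1 alpha_a2.
Qed.

Let flipY (e : {ffun 'I_n -> bool}) (t : T) : vecR R n := sign_flip e (Y t).

Let measurable_flipY e : measurable_fun setT (flipY e).
Proof. exact: measurableT_comp (measurable_sign_flip e) mY. Qed.

Let measurable_preimage_affine (B : set R) (a : R) :
  measurable B -> measurable [set x : R | B (a * (x - mu))].
Proof.
move=> mB; have m_affine : measurable_fun setT (fun x : R => a * (x - mu)).
  apply: measurable_funM; first exact: measurable_cst.
  by apply: measurable_funB; [exact: measurable_id | exact: measurable_cst].
by rewrite -[X in measurable X]setTI; exact: m_affine.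
Qed.

Let prob_flip_rect e (B : 'I_n -> set R) : (forall i, measurable (B i)) ->
  P (flipY e @^-1` [set y | forall i, B i (y i)]) =
  (\prod_(i < n) P (X i @^-1` [set x | B i (x - mu)%R]))%E.
Proof.
move=> mB.
have -> : flipY e @^-1` [set y | forall i, B i (y i)] =
    [set t | (forall i, [set x | B i (bsign (e i) * (x - mu))] (X i t)) /\
             (forall i j, [set: R] (alpha i j t)) /\ [set: {perm 'I_m'.+1}] (pi t)].
  by apply/seteqP; split => t /= => [|[]].
rewrite (@independent (fun i => [set x | B i (bsign (e i) * (x - mu))]) (fun _ _ => setT) setT)
  => [|i|//]; last exact: measurable_preimage_affine.
rewrite [X in (_ * X * _)%E]big1 => [|i _]; last first.
  by rewrite big1 // => j _; rewrite preimage_setT probability_setT.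
rewrite preimage_setT probability_setT !mule1; apply: eq_bigr => i _.
case: (e i); rewrite /bsign; last by congr (P _); apply/seteqP; split => x /=; rewrite mul1r.
rewrite (_ : X i @^-1` _ = (fun t => mu - X i t) @^-1` B i) -?X_symmetric //.
by apply/seteqP; split => t /=; rewrite mulN1r opprB.
Qed.

Let c : {nonneg R} := ((2^-1) ^+ (n * m') / (m'.+1`!)%:R)%:nng.

Let prob_cell_rect a s (B : 'I_n -> set R) : (forall i, measurable (B i)) ->
  P (Y @^-1` [set y | forall i, B i (y i)] `&` sign_cell a s) =
  ((c%:num)%:E * \prod_(i < n) P (X i @^-1` [set x | B i (x - mu)%R]))%E.
Proof.
move=> mB.
have mB_shift i : measurable [set x | B i (x - mu)].
  rewrite (_ : [set x | _] = [set x | B i (1 * (x - mu))]).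
    exact: measurable_preimage_affine.
  by apply/seteqP; split => x /=; rewrite mul1r.
have -> : Y @^-1` [set y | forall i, B i (y i)] `&` sign_cell a s =
    [set t | (forall i, [set x | B i (x - mu)] (X i t)) /\
             (forall i j, [set bsign (a j i)] (alpha i j t)) /\ [set s] (pi t)].
  by apply/seteqP; split => t /= => [[? []]|[? []]].
rewrite (@independent (fun i => [set x | B i (x - mu)]) (fun i j => [set bsign (a j i)]) [set s])
  => [|//|i j]; last exact: measurable_set1.
have prob_sign i j : P (alpha i j @^-1` [set bsign (a j i)]) = (2^-1)%:E.
  by rewrite /bsign; case: (a j i); [exact: alphaN1 | exact: alpha1].
have prob_signs : (\prod_(i < n) \prod_(j < m') P (alpha i j @^-1` [set bsign (a j i)]) =
    ((2^-1) ^+ (n * m'))%:E)%E.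
  transitivity (\prod_(i < n) (\prod_(j < m') (2^-1)%:E : \bar R))%E.
    by apply: eq_bigr => i _; apply: eq_bigr => j _; exact: prob_sign.
  rewrite (eq_bigr (fun _ => ((2^-1) ^+ m')%:E)) => [|i _]; last first.
    by rewrite prodEFin prodr_const card_ord.
  by rewrite prodEFin prodr_const card_ord -exprM mulnC.
by rewrite prob_signs pi_uniform -muleA -EFinM muleC.
Qed.

Let prob_cell_flip a s e (A : set (vecR R n)) : measurable A ->
  P (Y @^-1` A `&` sign_cell a s) = ((c%:num)%:E * P (flipY e @^-1` A))%E.
Proof.
apply: measure_preimageI_scale => // B mB.
by rewrite prob_cell_rect // prob_flip_rect.
Qed.

Let K : R := (r * (2 ^ n) ^ m'.+1 * m'.+1`!)%N%:R / m'.+1%:R.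

Let sum_prob_flip_cells : (\sum_(e : {ffun 'I_n -> bool})
    \sum_(x : {ffun 'I_m' -> {ffun 'I_n -> bool}} * {perm 'I_m'.+1})
      P (flipY e @^-1` rank_set x.1 x.2))%E = K%:E.
Proof.
rewrite pair_big /=.
apply: (@sum_probability_count_const _ _ _ P _
  (fun p t => m'.+1 - r < flip_rank k mu (flipY p.1 t) p.2.1 p.2.2)%N) => [p|t].
  by rewrite -[X in measurable X]setTI; exact: measurable_flipY (measurable_rank_set _ _).
rewrite /K -(sum_flip_rank k mu (Y t) r_le_m) natrM mulrC mulKf ?pnatr_eq0 //.
congr (_%:R); under [RHS]eq_bigr do rewrite pair_big.
by rewrite [RHS]pair_big.
Qed.

Lemma prob_rank_gt : P [set t | (m'.+1 - r <
    rank (m := m'.+1) k (fun i => X i t) (fun i j => alpha i j t) (pi t) mu)%N]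
  = (r%:R / m'.+1%:R)%:E.
Proof.
pose q e x := fine (P (flipY e @^-1` rank_set x.1 x.2)).
have Pq e x : P (flipY e @^-1` rank_set x.1 x.2) = (q e x)%:E.
  rewrite fineK // fin_num_measure //.
  by rewrite -[X in measurable X]setTI; exact: measurable_flipY (measurable_rank_set _ _).
have Pp : P rank_event = (fine (P rank_event))%:E by rewrite fineK // fin_num_measure.
have p_flip e : fine (P rank_event) = c%:num * \sum_x q e x.
  apply: EFin_inj; rewrite -Pp prob_rank_event_cells EFinM -sumEFin ge0_sume_distrr.
    by apply: eq_bigr => -[a s] _; rewrite -Pq; exact: prob_cell_flip.
  by move=> x _; rewrite -Pq; exact: measure_ge0.
have sum_q : \sum_e \sum_x q e x = K.
  apply: EFin_inj; rewrite -sum_prob_flip_cells -sumEFin; apply: eq_bigr => f _.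
  by rewrite -sumEFin; apply: eq_bigr => x _; rewrite Pq.
have total : (2 ^ n)%:R * fine (P rank_event) = c%:num * K.
  rewrite -sum_q mulr_sumr.
  transitivity (\sum_(e : {ffun 'I_n -> bool}) fine (P rank_event)).
    by rewrite sumr_const card_ffun card_bool card_ord mulr_natl.
  by apply: eq_bigr => f _; exact: p_flip.
rewrite Pp; congr (_%:E).
have two_n_neq0 : (2 ^ n)%:R != 0 :> R by rewrite pnatr_eq0 expn_eq0.
apply: (mulfI two_n_neq0); rewrite total /K /=.
rewrite exprM !exprVn !natrM !natrX exprS.
field; apply/and3P; split.
- by rewrite nat1r pnatr_eq0.
- by rewrite pnatr_eq0 -lt0n; exact: fact_gt0.
- by apply: expf_neq0; apply: expf_neq0.
Qed.

End resampled_rank.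

Unset Implicit Arguments. Set Strict Implicit.

Theorem theorem2 (R : realType) (d : measure_display) (T : measurableType d)
  (P : probability T R) (n k m r : nat)
  (X : 'I_n -> T -> R) (alpha : 'I_n -> 'I_m.-1 -> T -> R)
  (pi : T -> {perm 'I_m}) (mu : R) :
  (0 < k <= n)%N -> (1 <= r <= m)%N ->
  (* measurability of the data, the signs and the permutation *)
  (forall i, measurable_fun setT (X i)) ->
  (forall i j, measurable_fun setT (alpha i j)) ->
  (forall s, measurable (pi @^-1` [set s])) ->
  (* X_1,...,X_n identically distributed *)
  (forall i i' (B : set R), measurable B -> P (X i @^-1` B) = P (X i' @^-1` B)) ->
  (* symmetric about mu: X_i - mu and mu - X_i have the same distribution *)
  (forall i (B : set R), measurable B ->
     P ((fun t => X i t - mu) @^-1` B) = P ((fun t => mu - X i t) @^-1` B)) ->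
  (* Rademacher signs *)
  (forall i j, P (alpha i j @^-1` [set 1]) = (2^-1)%:E) ->
  (forall i j, P (alpha i j @^-1` [set -1]) = (2^-1)%:E) ->
  (* uniformly random permutation of {0,...,m-1} *)
  (forall s, P (pi @^-1` [set s]) = ((m`!)%:R^-1)%:E) ->
  (* mutual independence of all X_i, all alpha_{i,j} and pi *)
  (forall (B : 'I_n -> set R) (C : 'I_n -> 'I_m.-1 -> set R) (S : set {perm 'I_m}),
     (forall i, measurable (B i)) -> (forall i j, measurable (C i j)) ->
     P [set t | (forall i, B i (X i t)) /\ (forall i j, C i j (alpha i j t)) /\ S (pi t)]
     = ((\prod_(i < n) P (X i @^-1` B i))
        * (\prod_(i < n) \prod_(j < m.-1) P (alpha i j @^-1` C i j))
        * P (pi @^-1` S))%E) ->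
  P [set t | (m - r <
       rank k (fun i => X i t) (fun i j => alpha i j t) (pi t) mu)%N]
  = (r%:R / m%:R)%:E.
Proof.
case: m alpha pi => [|m'] alpha pi _ /andP[r_gt0 r_le_m] mX malpha mpi _ X_symmetric
  alpha1 alphaN1 pi_uniform independent; first by case: r r_gt0 r_le_m.
exact: (prob_rank_gt k r_le_m mX malpha mpi X_symmetric alpha1 alphaN1 pi_uniform independent).
Qed.
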